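(* Assume $\eta_{(i)}=\tau_{(i)}-1_K$ for all $i\in\Omega$, and let $Y\subseteq\Omega$. Then: (1) for any $D\subseteq\max(Y)$, $\displaystyle\pi(Y,D)=\sum_{A\subseteq D}(-1)^{|A|}\Big(\prod_{i\in\langle A\rangle_Y}\tau_{(i)}x\Big)\pi(Y-\langle A\rangle_Y,\emptyset)$; (2) for any $D\subseteq\max(Y)$, $\displaystyle\Big(\prod_{i\in\langle D\rangle_Y}\tau_{(i)}x\Big)\pi(Y-\langle D\rangle_Y,\emptyset)=\sum_{A\subseteq D}(-1)^{|A|}\pi(Y,A)$.
   Context: $\Omega$ is a finite set and $\mathbf{P}=(\Omega,\preccurlyeq_{\mathbf{P}})$ a poset. For $Y\subseteq\Omega$: $\max(Y)$ is the set of maximal elements of $Y$ w.r.t. $\preccurlyeq_{\mathbf{P}}$; $\mathcal{I}(Y)$ is the set of down-closed subsets of $Y$ (with the induced order); for $A\subseteq Y$, $\langle A\rangle_Y=\{y\in Y:\exists a\in A, y\preccurlyeq_{\mathbf{P}}a\}$. $K$ is a commutative ring, $\tau,\eta\in K^{\Omega}$. For $D,I\subseteq\Omega$, $\varphi(D,I)=(-1)^{|I\cap D|}\big(\prod_{i\in I-\max(I)}\tau_{(i)}\big)\big(\prod_{i\in\max(I)-D}\eta_{(i)}\big)$ if $I\cap D\subseteq\max(I)$, and $0$ otherwise. For $D\subseteq Y\subseteq\Omega$, $\pi(Y,D)=\sum_{I\in\mathcal{I}(Y)}\varphi(D,I)x^{|I|}\in K[x]$. The expression $\prod_{i\in S}\tau_{(i)}x$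 means $\prod_{i\in S}(\tau_{(i)}x)$. *)

From HB Require Import structures.
From mathcomp Require Import all_boot all_order all_algebra.
Set Implicit Arguments. Unset Strict Implicit. Unset Printing Implicit Defensive.
Import Order.TTheory GRing.Theory.
Local Open Scope ring_scope.

Section PosetPoly.
Variables (d : Order.disp_t) (T : finPOrderType d).

Definition maxs (Y : {set T}) : {set T} :=
  [set y in Y | [forall z in Y, (y <= z)%O ==> (z == y)]].

Definition ideals (Y : {set T}) : {set {set T}} :=
  [set I : {set T} | (I \subset Y) &&
     [forall i in I, forall j in Y, (j <= i)%O ==> (j \in I)]].

Definition gen (Y A : {set T}) : {set T} :=
  [set y in Y | [exists a in A, (y <= a)%O]].

Variables (K : comNzRingType) (tau eta : T -> K).

Definition phi_poset (D I : {set T}) : K :=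
  if I :&: D \subset maxs I then
    (-1) ^+ #|I :&: D| * (\prod_(i in I :\: maxs I) tau i)
      * (\prod_(i in maxs I :\: D) eta i)
  else 0.

Definition pi_poset (Y D : {set T}) : {poly K} :=
  \sum_(I in ideals Y) phi_poset D I *: 'X^#|I|.

End PosetPoly.

From HB Require Import structures.
From mathcomp Require Import all_boot all_order all_algebra ring.
Import Order.TTheory GRing.Theory.

Set Implicit Arguments.
Unset Strict Implicit.
Unset Printing Implicit Defensive.
Local Open Scope ring_scope.

(* Let a be a maximal element of Y outside D.  Then
     π(Y, D ∪ {a}) = π(Y, D) − (∏_{i ∈ ⟨a⟩_Y} τ_i x) · π(Y − ⟨a⟩_Y, D):
   ideals avoiding a contribute the same term to both sides, while an ideal
   containing a is J ∪ ⟨a⟩_Y with J an ideal of Y − ⟨a⟩_Y, and its weights for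
   D ∪ {a} and for D differ only in the factor at a, which is −1 instead of
   η_a = τ_a − 1.  Both identities then follow by induction on D, because
   ⟨A ∪ {a}⟩_Y is the disjoint union of ⟨a⟩_Y and ⟨A⟩_{Y − ⟨a⟩_Y}. *)

Lemma finset_ind (T : finType) (P : {set T} -> Prop) :
  P set0 -> (forall a (D : {set T}), a \notin D -> P D -> P (a |: D)) -> forall D, P D.
Proof.
move=> P0 PU D; elim: {D}_.+1 {-2}D (ltnSn #|D|) => // n IH D.
case: (set_0Vmem D) => [-> // | [a aD]]; rewrite -(setD1K aD) cardsU1 setD11.
by move=> ltDn; apply: PU (IH _ ltDn); rewrite setD11.
Qed.

Lemma sum_subset0 (T : finType) (V : nmodType) (F : {set T} -> V) :
  \sum_(A : {set T} | A \subset set0) F A = F set0.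
Proof. by rewrite (big_pred1 set0) // => A; rewrite subset0. Qed.

Lemma sum_subsetU1 (T : finType) (V : nmodType) a (D : {set T}) (F : {set T} -> V) :
  a \notin D ->
  \sum_(A : {set T} | A \subset a |: D) F A =
  \sum_(A : {set T} | A \subset D) F A + \sum_(A : {set T} | A \subset D) F (a |: A).
Proof.
move=> aD; have subD (B : {set T}) : (B \subset D) = (B \subset a |: D) && (a \notin B).
  by rewrite -[D in LHS](setU1K aD); apply: subsetD1.
rewrite (bigID (fun A : {set T} => a \in A)) /= addrC; congr (_ + _).
  by apply: eq_bigl => A; rewrite subD.
rewrite (reindex_onto (fun B : {set T} => a |: B) (fun A : {set T} => A :\ a)); last first.
  by move=> A /andP[_ aA]; apply: setD1K.
apply: eq_bigl => B; rewrite [RHS]subD setU11 andbT subUset sub1set setU11 /=.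
by rewrite setDUl setDv set0U eqEsubset subsetDl subsetD1 subxx.
Qed.

Section DownSets.
Variables (d : Order.disp_t) (T : finPOrderType d).
Implicit Types (Y A D E I J : {set T}) (a x : T).

Lemma maxsP Y x :
  reflect (x \in Y /\ forall z, z \in Y -> (x <= z)%O -> z = x) (x \in maxs Y).
Proof.
rewrite inE; apply: (iffP andP) => -[Yx maxx]; split=> //.
  by move=> z Yz le_xz; apply/eqP; move/forall_inP/(_ z Yz)/implyP: maxx; apply.
by apply/forall_inP => z Yz; apply/implyP => /(maxx z Yz) ->.
Qed.

Lemma maxs_subset Y : maxs Y \subset Y.
Proof. by apply/subsetP => x /maxsP[]. Qed.

Lemma maxsS_mem Y I x : I \subset Y -> x \in I -> x \in maxs Y -> x \in maxs I.
Proof.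
move=> /subsetP IY Ix /maxsP[_ maxx]; apply/maxsP; split=> // z Iz.
exact: maxx (IY _ Iz).
Qed.

Lemma setI_maxs_subset Y I D : I \subset Y -> D \subset maxs Y -> I :&: D \subset maxs I.
Proof.
move=> IY /subsetP DY; apply/subsetP => x /setIP[Ix Dx].
exact: maxsS_mem IY Ix (DY _ Dx).
Qed.

Lemma idealsP Y I :
  reflect (I \subset Y /\ forall i j, i \in I -> j \in Y -> (j <= i)%O -> j \in I)
          (I \in ideals Y).
Proof.
rewrite inE; apply: (iffP andP) => -[IY downI]; split=> //.
  by move=> i j Ii Yj le_ji; move/forall_inP/(_ i Ii)/forall_inP/(_ j Yj)/implyP: downI; apply.
by apply/forall_inP => i Ii; apply/forall_inP => j Yj; apply/implyP; apply: downI.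
Qed.

Lemma gen1E Y a x : (x \in gen Y [set a]) = (x \in Y) && (x <= a)%O.
Proof.
rewrite inE; congr (_ && _); apply/existsP/idP => [[b /andP[/set1P -> //]] | le_xa].
by exists a; rewrite set11.
Qed.

Lemma gen0 Y : gen Y set0 = set0.
Proof. by apply/setP => x; rewrite !inE; apply/andP => -[_ /existsP[b]]; rewrite inE. Qed.

Lemma gen_subset Y A : gen Y A \subset Y.
Proof. by apply/subsetP => x /setIdP[]. Qed.

Lemma genU1 Y a A : gen Y (a |: A) = gen Y [set a] :|: gen (Y :\: gen Y [set a]) A.
Proof.
apply/setP => x; rewrite in_setU gen1E [x \in gen (_ :\: _) A]inE in_setD gen1E inE.
have -> : [exists b in a |: A, (x <= b)%O] = (x <= a)%O || [exists b in A, (x <= b)%O].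
  apply/existsP/orP => [[b /andP[/setU1P[-> | Ab] le_xb]] | [le_xa | /existsP[b /andP[Ab le_xb]]]].
  - by left.
  - by right; apply/existsP; exists b; rewrite Ab.
  - by exists a; rewrite setU11.
  - by exists b; rewrite setU1r.
by case: (x \in Y); case: (x <= a)%O.
Qed.

Section PrincipalDownSet.
Variables (Y : {set T}) (a : T).
Hypothesis aY : a \in maxs Y.
Local Notation G := (gen Y [set a]).

Lemma mem_gen1 : a \in G.
Proof. by rewrite gen1E lexx andbT; case/maxsP: aY. Qed.

Lemma maxs_gen1 x : x \in maxs Y -> x \in G -> x = a.
Proof.
case/maxsP=> _ maxx; rewrite gen1E => /andP[_ le_xa].
by case/maxsP: aY => Ya _; apply/esym/maxx.
Qed.

Lemma maxs_setD_gen1 D : D \subset maxs Y -> a \notin D -> D \subset maxs (Y :\: G).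
Proof.
move=> /subsetP DY aD; apply/subsetP => x Dx; have Yx := DY _ Dx.
have YGx : x \in Y :\: G.
  rewrite in_setD (subsetP (maxs_subset Y) _ Yx) andbT.
  by apply: contra aD => /(maxs_gen1 Yx) <-.
exact: maxsS_mem (subsetDl _ _) YGx Yx.
Qed.

Lemma maxs_setU_gen1 J : J \subset Y :\: G -> maxs (J :|: G) = a |: maxs J.
Proof.
rewrite subsetD => /andP[/subsetP JY /pred0P disJG].
have JnotG x : x \in J -> x \in G = false by move=> Jx; have := disJG x; rewrite /= Jx.
have [Ya maxa] := maxsP _ _ aY.
apply/setP => x; rewrite in_setU1; apply/maxsP/orP => [[/setUP[Jx | Gx] maxx] | ].
- by right; apply/maxsP; split=> // z Jz; apply: maxx; rewrite inE Jz.
- by left; apply/eqP/esym/maxx; [rewrite inE mem_gen1 orbT | move: Gx; rewrite gen1E => /andP[]].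
case=> [/eqP -> | /maxsP[Jx maxx]].
  split=> [|z /setUP[/JY | ]]; first by rewrite inE mem_gen1 orbT.
    exact: maxa.
  by rewrite gen1E => /andP[Yz _]; apply: maxa.
split=> [|z /setUP[Jz | Gz le_xz]]; first by rewrite inE Jx.
  exact: maxx.
suff : x \in G by rewrite JnotG.
by move: Gz; rewrite !gen1E (JY _ Jx) => /andP[_ le_za]; apply: le_trans le_xz le_za.
Qed.

Lemma sum_ideals_gen1 (V : nmodType) (F : {set T} -> V) :
  \sum_(I in ideals Y | a \in I) F I = \sum_(J in ideals (Y :\: G)) F (J :|: G).
Proof.
rewrite (reindex_onto (fun J => J :|: G) (fun I => I :\: G)); last first.
  move=> I /andP[/idealsP[_ downI] aI]; apply/setP => x; rewrite in_setU in_setD.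
  case: (boolP (x \in G)) => /= Gx; last exact: orbF.
  by apply/esym/(downI a); move: Gx; rewrite gen1E => /andP[].
  apply: eq_bigl => J; rewrite in_setU mem_gen1 orbT andbT.
  apply/andP/idealsP => [[/idealsP[JGY downJG] /eqP <-] | [JYG downJ]].
    split=> [|i j /setDP[JGi Gi] /setDP[Yj Gj] le_ji]; first exact: setSD.
    by rewrite inE Gj (downJG i).
  have disJG : [disjoint J & G] by move: JYG; rewrite subsetD => /andP[].
  split; last by rewrite setDUl setDv setU0; apply/eqP/setDidPl.
  apply/idealsP; split=> [|i j /setUP[Ji | Gi] Yj le_ji].
  - by rewrite subUset gen_subset (subset_trans JYG) ?subsetDl.
  - case Gj : (j \in G); first by rewrite inE Gj orbT.
    by rewrite in_setU (downJ i) // in_setD Gj Yj.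
  - by rewrite inE orbC gen1E Yj (le_trans le_ji) //; move: Gi; rewrite gen1E => /andP[].
Qed.

End PrincipalDownSet.

Section Polynomials.
Variables (K : comNzRingType) (tau eta : T -> K).

Definition phi_weight (M D : {set T}) (i : T) : K :=
  if i \in M then (if i \in D then -1 else eta i) else tau i.

Lemma phi_poset_prod D I : I :&: D \subset maxs I ->
  phi_poset tau eta D I = \prod_(i in I) phi_weight (maxs I) D i.
Proof.
move=> IDmax; have maxI := maxs_subset I; rewrite /phi_poset IDmax.
have -> : I :&: D = maxs I :&: D.
  by apply/eqP; rewrite eqEsubset (setSI _ maxI) andbT subsetI IDmax subsetIr.
rewrite [RHS](bigID (mem (maxs I))) /= mulrAC; congr (_ * _); last first.
  apply: eq_big => [i | i /setDP[_ maxIi]]; first by rewrite in_setD andbC.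
  by rewrite /phi_weight (negbTE maxIi).
have -> : \prod_(i in I | i \in maxs I) phi_weight (maxs I) D i =
          \prod_(i in maxs I) (if i \in D then -1 else eta i).
  apply: eq_big => [i | i /andP[_ maxIi]]; first exact/andb_idl/(subsetP maxI).
  by rewrite /phi_weight maxIi.
rewrite [RHS](bigID (mem D)) /= -prodr_const; congr (_ * _).
  by apply: eq_big => [i | i /setIP[_ ->]]; first exact: in_setI.
apply: eq_big => [i | i /setDP[_ Di]]; first by rewrite in_setD andbC.
by rewrite (negbTE Di).
Qed.

Lemma eq_phi_poset D1 D2 I : I :&: D1 = I :&: D2 ->
  phi_poset tau eta D1 I = phi_poset tau eta D2 I.
Proof.
move=> ID; rewrite /phi_poset ID; suff -> : maxs I :\: D1 = maxs I :\: D2 by [].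
apply/setP => x; rewrite !in_setD.
case: (boolP (x \in maxs I)) => [maxIx | _]; last by rewrite !andbF.
by move/setP/(_ x): ID; rewrite !in_setI (subsetP (maxs_subset I) _ maxIx) => /= ->.
Qed.

Hypothesis eta_tau : forall i, eta i = tau i - 1.

Section DeleteMaximal.
Variables (Y : {set T}) (a : T).
Hypothesis aY : a \in maxs Y.
Local Notation G := (gen Y [set a]).

Lemma phi_poset_setU_gen1 E J : E \subset maxs Y -> J \in ideals (Y :\: G) ->
  phi_poset tau eta E (J :|: G) =
  (if a \in E then -1 else eta a) * \prod_(i in G :\ a) tau i * phi_poset tau eta E J.
Proof.
move=> EY /idealsP[JYG _]; have JY : J \subset Y := subset_trans JYG (subsetDl _ _).
have disJG : [disjoint J & G] by move: JYG; rewrite subsetD => /andP[].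
have notGJ i : i \in G -> i \in J = false.
  by move=> Gi; apply/negP => Ji; have := pred0P disJG i; rewrite /= Ji Gi.
have JGY : J :|: G \subset Y by rewrite subUset JY gen_subset.
rewrite (phi_poset_prod (setI_maxs_subset JGY EY)) (phi_poset_prod (setI_maxs_subset JY EY)).
rewrite maxs_setU_gen1 // setUC (big_setID G) setUK setDUl setDv set0U (setDidPl disJG) /=.
rewrite (big_setD1 _ (mem_gen1 aY)) /= {1}/phi_weight setU11.
congr (_ * _ * _); apply: eq_bigr => i.
  case/setD1P=> /negbTE nai Gi.
  by rewrite /phi_weight in_setU1 nai (contraFF (subsetP (maxs_subset J) i)) ?notGJ.
move=> Ji; rewrite /phi_weight in_setU1.
by case: eqP Ji => [-> | //]; rewrite notGJ // mem_gen1.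
Qed.

Lemma pi_poset_setU1 D : D \subset maxs Y -> a \notin D ->
  pi_poset tau eta Y (a |: D) =
  pi_poset tau eta Y D - \prod_(i in G) ((tau i)%:P * 'X) * pi_poset tau eta (Y :\: G) D.
Proof.
move=> DY aD; have aDY : a |: D \subset maxs Y by rewrite subUset sub1set aY.
have pi_split E : pi_poset tau eta Y E =
    \sum_(J in ideals (Y :\: G)) phi_poset tau eta E (J :|: G) *: 'X^(#|J| + #|G|) +
    \sum_(I in ideals Y | a \notin I) phi_poset tau eta E I *: 'X^#|I|.
  rewrite /pi_poset (bigID (fun I => a \in I)) /= (sum_ideals_gen1 aY); congr (_ + _).
  apply: eq_bigr => J /idealsP[JYG _]; move: JYG; rewrite subsetD => /andP[_ disJG].
  by rewrite cardsU (disjoint_setI0 disJG) cards0 subn0.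
have nota_eq I : a \notin I -> phi_poset tau eta (a |: D) I = phi_poset tau eta D I.
  move=> aI; apply: eq_phi_poset; apply/setP => x; rewrite !inE.
  by case: eqP => // ->; rewrite (negbTE aI).
rewrite !pi_split mulr_sumr addrAC -sumrB.
congr (_ + _); last by apply: eq_bigr => I /andP[_ /nota_eq ->].
apply: eq_bigr => J idJ.
have aJ : a \notin J.
  by move/idealsP: idJ => [/subsetP JYG _]; apply/negP => /JYG; rewrite inE mem_gen1.
rewrite !(phi_poset_setU_gen1 _ idJ) // setU11 (negbTE aD) nota_eq //.
rewrite big_split /= -rmorph_prod prodr_const (big_setD1 _ (mem_gen1 aY)) /= eta_tau.
rewrite exprD -!mul_polyC !rmorphM rmorphB rmorphN rmorph1 /=.
ring.
Qed.

End DeleteMaximal.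

Local Notation cone Y A :=
  (\prod_(i in gen Y A) ((tau i)%:P * 'X) * pi_poset tau eta (Y :\: gen Y A) set0).

Lemma cone_setU1 Y a A :
  cone Y (a |: A) =
  \prod_(i in gen Y [set a]) ((tau i)%:P * 'X) * cone (Y :\: gen Y [set a]) A.
Proof.
set G := gen Y [set a]; have disG : [disjoint G & gen (Y :\: G) A].
  by rewrite disjoint_sym; have := gen_subset (Y :\: G) A; rewrite subsetD => /andP[].
rewrite genU1 -setDDl (eq_bigl [predU G & gen (Y :\: G) A]) => [|i]; last exact: in_setU.
by rewrite bigU // mulrA.
Qed.

Lemma cone0 Y : cone Y set0 = pi_poset tau eta Y set0.
Proof. by rewrite gen0 big_set0 mul1r setD0. Qed.

Lemma pi_poset_sum_cones D Y : D \subset maxs Y ->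
  pi_poset tau eta Y D = \sum_(A : {set T} | A \subset D) (-1) ^+ #|A| *: cone Y A.
Proof.
elim/finset_ind: D Y => [|a D aD IH] Y; first by rewrite sum_subset0 cards0 scale1r cone0.
move=> aDY; have aY : a \in maxs Y by rewrite (subsetP aDY) ?setU11.
have DY : D \subset maxs Y := subset_trans (subsetUr _ _) aDY.
rewrite pi_poset_setU1 // sum_subsetU1 // !IH ?maxs_setD_gen1 // mulr_sumr -sumrN.
congr (_ + _); apply: eq_bigr => A AD.
by rewrite cone_setU1 cardsU1 (contraNN (subsetP AD a) aD) exprS mulN1r scaleNr -scalerAr.
Qed.

Lemma cone_sum_pi_poset D Y : D \subset maxs Y ->
  cone Y D = \sum_(A : {set T} | A \subset D) (-1) ^+ #|A| *: pi_poset tau eta Y A.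
Proof.
elim/finset_ind: D Y => [|a D aD IH] Y; first by rewrite sum_subset0 cards0 scale1r cone0.
move=> aDY; have aY : a \in maxs Y by rewrite (subsetP aDY) ?setU11.
have DY : D \subset maxs Y := subset_trans (subsetUr _ _) aDY.
rewrite cone_setU1 IH ?maxs_setD_gen1 // sum_subsetU1 // -big_split mulr_sumr /=.
apply: eq_bigr => A AD; have aA : a \notin A := contraNN (subsetP AD a) aD.
rewrite cardsU1 aA exprS mulN1r scaleNr (pi_poset_setU1 aY (subset_trans AD DY) aA).
by rewrite scalerBr opprB addrC subrK scalerAr.
Qed.

End Polynomials.
End DownSets.

Theorem theorem3p2 (d : Order.disp_t) (T : finPOrderType d) (K : comNzRingType)
    (tau eta : T -> K) (Heta : forall i, eta i = tau i - 1) (Y : {set T}) :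
  (forall D : {set T}, D \subset maxs Y ->
     pi_poset tau eta Y D =
     \sum_(A : {set T} | A \subset D)
        (-1) ^+ #|A| *: ((\prod_(i in gen Y A) ((tau i)%:P * 'X))
                          * pi_poset tau eta (Y :\: gen Y A) set0)) /\
  (forall D : {set T}, D \subset maxs Y ->
     (\prod_(i in gen Y D) ((tau i)%:P * 'X)) * pi_poset tau eta (Y :\: gen Y D) set0 =
     \sum_(A : {set T} | A \subset D) (-1) ^+ #|A| *: pi_poset tau eta Y A).
Proof.
by split=> D; [apply: pi_poset_sum_cones | apply: cone_sum_pi_poset].
Qed.
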